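(* Suppose that a $(v,k,\lambda)$-BIBD has a nesting. Then $k\ge 2\lambda+1$.
   Context: A $(v,k,\lambda)$-BIBD is a pair $(X,\mathcal{A})$ where $X$ is a set of $v$ points and $\mathcal{A}$ is a multiset of $k$-subsets of $X$ (blocks) such that every pair of distinct points lies in exactly $\lambda$ blocks; a partial $(v,k,\lambda)$-BIBD is defined the same way except that every pair lies in at most $\lambda$ blocks. A nesting of a $(v,k,\lambda)$-BIBD $(X,\mathcal{A})$ is a map $\phi:\mathcal{A}\to X$ such that $(X,\{A\cup\{\phi(A)\}: A\in\mathcal{A}\})$ (a multiset of blocks) is a partial $(v,k+1,\lambda+1)$-BIBD (in particular $\phi(A)\notin A$). *)

From mathcomp Require Import all_boot.
Set Implicit Arguments. Unset Strict Implicit. Unset Printing Implicit Defensive.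

(* Points are 'I_v; the multiset of blocks is a sequence of subsets
   (repetitions allowed). *)

Definition uniform_blocks (v k : nat) (A : seq {set 'I_v}) : Prop :=
  forall B, B \in A -> #|B| = k.

Definition pair_count (v : nat) (A : seq {set 'I_v}) (x y : 'I_v) : nat :=
  count (fun B : {set 'I_v} => (x \in B) && (y \in B)) A.

Definition is_BIBD (v k lam : nat) (A : seq {set 'I_v}) : Prop :=
  uniform_blocks k A /\
  forall x y : 'I_v, x != y -> pair_count A x y = lam.

Definition is_partial_BIBD (v k lam : nat) (A : seq {set 'I_v}) : Prop :=
  uniform_blocks k A /\
  forall x y : 'I_v, x != y -> pair_count A x y <= lam.

(* A nesting: a map from the blocks (indexed by position in the multiset,
   so that repeated blocks may be mapped to different points) to points
   such that the extended blocks A_i ∪ {phi i} form a partial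
   (v, k+1, lambda+1)-BIBD. *)
Definition extended_blocks (v : nat) (A : seq {set 'I_v})
    (phi : 'I_(size A) -> 'I_v) : seq {set 'I_v} :=
  [seq phi i |: nth set0 A i | i <- enum 'I_(size A)].

Definition is_nesting (v k lam : nat) (A : seq {set 'I_v})
    (phi : 'I_(size A) -> 'I_v) : Prop :=
  is_partial_BIBD k.+1 lam.+1 (extended_blocks phi).

(* Count the ordered pairs of distinct points covered by the blocks.  In the
   BIBD every such pair is covered lambda times, so b k (k-1) = v (v-1) lambda;
   in the nested design, whose blocks have size k+1, every pair is covered at
   most lambda+1 times, so b (k+1) k <= v (v-1) (lambda+1).  Subtracting gives
   2 b k <= v (v-1); multiplying by k-1 and using the first identity gives
   2 lambda <= k-1. *)

From mathcomp Require Import all_boot.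
From mathcomp Require Import zify.

Set Implicit Arguments.
Unset Strict Implicit.
Unset Printing Implicit Defensive.

Section OffDiagonalSums.

Variable v : nat.

Definition offdiag_sum (f : 'I_v -> 'I_v -> nat) : nat :=
  \sum_(x : 'I_v) \sum_(y | y != x) f x y.

Lemma offdiag_sum_le_const (f : 'I_v -> 'I_v -> nat) (c : nat) :
  (forall x y, x != y -> f x y <= c) -> offdiag_sum f <= v * v.-1 * c.
Proof.
move=> le_f_c; rewrite -mulnA -[v in v * _]card_ord -sum_nat_const.
apply: leq_sum => x _.
have -> : v.-1 = #|predC1 x| by rewrite cardC1 card_ord.
rewrite -sum_nat_const.
by apply: leq_sum => y yx; apply: le_f_c; rewrite eq_sym.
Qed.

Lemma offdiag_sum_const (f : 'I_v -> 'I_v -> nat) (c : nat) :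
  (forall x y, x != y -> f x y = c) -> offdiag_sum f = v * v.-1 * c.
Proof.
move=> f_c; rewrite -mulnA -[v in v * _]card_ord -sum_nat_const.
apply: eq_bigr => x _.
have -> : v.-1 = #|predC1 x| by rewrite cardC1 card_ord.
rewrite -sum_nat_const.
by apply: eq_bigr => y yx; apply: f_c; rewrite eq_sym.
Qed.

Lemma offdiag_sum_set (B : {set 'I_v}) :
  offdiag_sum (fun x y => (x \in B) && (y \in B)) = #|B| * #|B|.-1.
Proof.
rewrite /offdiag_sum (bigID (mem B)) /= [X in _ + X]big1 ?addn0; last first.
  by move=> x /negbTE xB; rewrite big1 // => y _; rewrite xB.
rewrite -sum_nat_const; apply: eq_bigr => x xB.
rewrite xB -big_mkcondr sum1_card (cardsD1 x B) xB add1n /=.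
by apply: eq_card => y; rewrite !inE.
Qed.

Lemma offdiag_sum_pair_count (m : nat) (L : seq {set 'I_v}) :
  uniform_blocks m L -> offdiag_sum (pair_count L) = size L * (m * m.-1).
Proof.
move=> uniL.
have pair_countE x y :
    pair_count L x y = \sum_(B <- L) ((x \in B) && (y \in B) : nat).
  by rewrite /pair_count -sum1_count big_mkcond.
rewrite /offdiag_sum.
under eq_bigr => x _ do under eq_bigr => y _ do rewrite pair_countE.
under eq_bigr => x _ do rewrite exchange_big /=.
rewrite exchange_big /= (eq_big_seq (fun _ => m * m.-1)); last first.
  by move=> B BL; rewrite -(uniL B BL) -offdiag_sum_set.
by rewrite big_const_seq count_predT iter_addn_0 mulnC.
Qed.

End OffDiagonalSums.

Lemma BIBD_pair_count (v k lam : nat) (A : seq {set 'I_v}) :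
  is_BIBD k lam A -> size A * (k * k.-1) = v * v.-1 * lam.
Proof.
by case=> uniA countA; rewrite -(offdiag_sum_pair_count uniA) (offdiag_sum_const countA).
Qed.

Lemma partial_BIBD_pair_count (v k lam : nat) (A : seq {set 'I_v}) :
  is_partial_BIBD k lam A -> size A * (k * k.-1) <= v * v.-1 * lam.
Proof.
by case=> uniA countA; rewrite -(offdiag_sum_pair_count uniA) offdiag_sum_le_const.
Qed.

Lemma size_extended_blocks (v : nat) (A : seq {set 'I_v})
    (phi : 'I_(size A) -> 'I_v) :
  size (extended_blocks phi) = size A.
Proof. by rewrite size_map size_enum_ord. Qed.

Lemma nested_count_bound (b k lam N : nat) :
  0 < N -> 0 < k ->
  b * (k * k.-1) = N * lam -> b * (k.+1 * k) <= N * lam.+1 ->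
  2 * lam + 1 <= k.
Proof.
move=> N_gt0 k_gt0 exact_count nested_count.
have two_bk_le_N : 2 * (b * k) <= N.
  have split_count : b * (k.+1 * k) = b * (k * k.-1) + 2 * (b * k).
    by rewrite -(prednK k_gt0) /=; nia.
  by rewrite -(leq_add2l (N * lam)) -exact_count -split_count; nia.
have : N * (2 * lam) <= N * k.-1.
  rewrite mulnCA -exact_count.
  by apply: leq_trans (leq_mul two_bk_le_N (leqnn k.-1)); rewrite !mulnA.
by rewrite leq_pmul2l //; lia.
Qed.

Theorem mainTheorem3 (v k lam : nat) (A : seq {set 'I_v}) :
  2 <= k -> k < v ->
  is_BIBD k lam A ->
  (exists phi : 'I_(size A) -> 'I_v, is_nesting k lam phi) ->
  2 * lam + 1 <= k.
Proof.
move=> k_ge2 k_lt_v designA [phi nesting].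
have := partial_BIBD_pair_count nesting.
rewrite size_extended_blocks => nested_count.
apply: (nested_count_bound _ _ (BIBD_pair_count designA) nested_count); lia.
Qed.
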